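(* Over all 3-periodics of $\mathcal{E}$, the incenter $X_1^\dagger$ of the focus-inversive triangle moves on the circle with center and radius \[C_1^\dagger=\left(c\left(-1+\rho^2\frac{-2a^2+b^2+2\delta}{2b^4}\right),0\right),\qquad R_1^\dagger=\rho^2\,\frac{-2\delta^2+b^4+(2a^2-b^2)\delta}{2ab^4}.\]
   Context: Let $a>b>0$ and let $\mathcal{E}$ be the ellipse $x^2/a^2+y^2/b^2=1$. Set $c=\sqrt{a^2-b^2}$, $\delta=\sqrt{a^4-a^2b^2+b^4}$, and let the foci be $f_1=(-c,0)$, $f_2=(c,0)$. A 3-periodic is a triangle $P_1P_2P_3$ with vertices on $\mathcal{E}$ such that at each vertex the normal to $\mathcal{E}$ bisects the angle formed by the two sides meeting at that vertex; these form a one-parameter family (one through every point of $\mathcal{E}$). Fix $\rho>0$; the focus-inversive triangle has vertices $P_i^\dagger=f_1+(\rho/d_{1,i})^2(P_i-f_1)$, $d_{1,i}=|P_i-f_1|$. *)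

From Stdlib Require Import Reals.
Open Scope R_scope.

Definition pt : Type := (R * R)%type.

Definition pdist (p q : pt) : R :=
  sqrt ((fst p - fst q) ^ 2 + (snd p - snd q) ^ 2).

Definition on_ellipse (a b : R) (p : pt) : Prop :=
  (fst p) ^ 2 / a ^ 2 + (snd p) ^ 2 / b ^ 2 = 1.

Definition noncollinear (P Q S : pt) : Prop :=
  (fst Q - fst P) * (snd S - snd P) - (snd Q - snd P) * (fst S - fst P) <> 0.

(* At vertex P (on the ellipse), the normal to the ellipse, with direction
   (x/a^2, y/b^2), bisects the angle formed by the sides PQ and PS: the
   normal is parallel to the (internal) bisector direction u + v, where
   u, v are the unit vectors from P towards Q and S. *)
Definition normal_bisects (a b : R) (P Q S : pt) : Prop :=
  let ux := (fst Q - fst P) / pdist P Q in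
  let uy := (snd Q - snd P) / pdist P Q in
  let vx := (fst S - fst P) / pdist P S in
  let vy := (snd S - snd P) / pdist P S in
  let nx := fst P / a ^ 2 in
  let ny := snd P / b ^ 2 in
  (ux + vx) * ny - (uy + vy) * nx = 0.

Definition three_periodic (a b : R) (P1 P2 P3 : pt) : Prop :=
  on_ellipse a b P1 /\ on_ellipse a b P2 /\ on_ellipse a b P3 /\
  noncollinear P1 P2 P3 /\
  normal_bisects a b P1 P2 P3 /\
  normal_bisects a b P2 P3 P1 /\
  normal_bisects a b P3 P1 P2.

Definition focus1 (a b : R) : pt := (- sqrt (a ^ 2 - b ^ 2), 0).

Definition invert (f : pt) (rho : R) (P : pt) : pt :=
  let k := (rho / pdist P f) ^ 2 in
  (fst f + k * (fst P - fst f), snd f + k * (snd P - snd f)).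

Definition incenter (A B C : pt) : pt :=
  let la := pdist B C in
  let lb := pdist C A in
  let lc := pdist A B in
  let s := la + lb + lc in
  ((la * fst A + lb * fst B + lc * fst C) / s,
   (la * snd A + lb * snd B + lc * snd C) / s).

Definition delta (a b : R) : R := sqrt (a ^ 4 - a ^ 2 * b ^ 2 + b ^ 4).

From Stdlib Require Import Reals Lra.
From Coquelicot Require Import Rcomplements Complex.
Open Scope R_scope.

(* Write each vertex in polar coordinates about the focus f1 = (-c, 0): P = f1 + r u with
   |u| = 1 and r = b^2 / (a - c u_x).  Inversion about f1 keeps u and replaces r by rho^2 / r.

   By the reflection law all sides of a 3-periodic are tangent to one conic
   x^2/(a^2 - lam) + y^2/(b^2 - lam) = 1 confocal with the ellipse, and a chord P_j P_k
   tangent to it has length a |u_j - u_k|^2 r_j r_k / (2 b sqrt lam).  Hence the sides of the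
   focus-inversive triangle are proportional to |u_j - u_k|^2, and its incenter is the mean of
   the inverted vertices with these weights.

   Viewing the u_j as complex numbers, tangency becomes a symmetric biquadratic relation
   between u_j and u_k; three distinct roots on the unit circle force u_1 + u_2 + u_3 = t to
   be real with a c t^2 - 2 (a^2 + c^2) t + 3 a c = 0.  The weighted mean then equals
   f1 + rho^2 t (3 - t u_1 u_2 u_3) / (a (9 - t^2)), a point of a fixed circle because
   |u_1 u_2 u_3| = 1. *)

Definition sqdist (P Q : pt) : R := (fst P - fst Q) ^ 2 + (snd P - snd Q) ^ 2.

Lemma sqdist_nonneg (P Q : pt) : 0 <= sqdist P Q.
Proof. apply Rplus_le_le_0_compat; apply pow2_ge_0. Qed.

Lemma pdist_sqr (P Q : pt) : pdist P Q ^ 2 = sqdist P Q.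
Proof. apply pow2_sqrt, sqdist_nonneg. Qed.

Lemma pdist_nonneg (P Q : pt) : 0 <= pdist P Q.
Proof. apply sqrt_pos. Qed.

Lemma pdist_eq (P Q : pt) (d : R) : 0 <= d -> sqdist P Q = d ^ 2 -> pdist P Q = d.
Proof. intros hd E. change (sqrt (sqdist P Q) = d). rewrite E. now apply sqrt_pow2. Qed.

Lemma sqdist_pos (P Q : pt) : P <> Q -> 0 < sqdist P Q.
Proof.
  destruct P as [x y], Q as [x' y']; unfold sqdist; simpl; intros H.
  destruct (Req_dec x x') as [<-|hx].
  - assert (hy : y - y' <> 0) by (intro E; apply H; f_equal; lra).
    assert (h := pow2_gt_0 _ hy). assert (h0 := pow2_ge_0 (x - x)). lra.
  - assert (h := pow2_gt_0 (x - x') ltac:(lra)). assert (h0 := pow2_ge_0 (y - y')). lra.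
Qed.

Lemma pdist_pos (P Q : pt) : P <> Q -> 0 < pdist P Q.
Proof.
  intros H. assert (h := sqdist_pos _ _ H). rewrite <- pdist_sqr in h.
  assert (h0 := pdist_nonneg P Q). nra.
Qed.

Lemma pdist_pos_neq (P Q : pt) : 0 < pdist P Q -> P <> Q.
Proof. intros h <-. rewrite (pdist_eq P P 0) in h; [lra | lra | unfold sqdist; ring]. Qed.

Lemma pdist_invert (f : pt) (rho : R) (P Q : pt) : P <> f -> Q <> f ->
  pdist (invert f rho P) (invert f rho Q) = rho ^ 2 * pdist P Q / (pdist P f * pdist Q f).
Proof.
  intros hP hQ.
  assert (dP := pdist_pos _ _ hP). assert (dQ := pdist_pos _ _ hQ).
  apply pdist_eq.
  { apply Rdiv_le_0_compat; [|nra]. assert (h := pdist_nonneg P Q). nra. }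
  assert (EP := pdist_sqr P f). assert (EQ := pdist_sqr Q f). assert (E := pdist_sqr P Q).
  unfold invert, sqdist in *.
  destruct P as [x y], Q as [x' y'], f as [fx fy]; cbn [fst snd] in *.
  set (dPf := pdist (x, y) (fx, fy)) in *. set (dQf := pdist (x', y') (fx, fy)) in *.
  set (d := pdist (x, y) (x', y')) in *.
  transitivity (rho ^ 4 * (((x - fx) ^ 2 + (y - fy) ^ 2) / dPf ^ 4
    - 2 * ((x - fx) * (x' - fx) + (y - fy) * (y' - fy)) / (dPf ^ 2 * dQf ^ 2)
    + ((x' - fx) ^ 2 + (y' - fy) ^ 2) / dQf ^ 4)).
  { field. lra. }
  rewrite <- EP, <- EQ.
  replace ((rho ^ 2 * d / (dPf * dQf)) ^ 2) with (rho ^ 4 * d ^ 2 / (dPf ^ 2 * dQf ^ 2))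
    by (field; lra).
  rewrite E.
  replace ((x - x') ^ 2 + (y - y') ^ 2)
    with (dPf ^ 2 + dQf ^ 2 - 2 * ((x - fx) * (x' - fx) + (y - fy) * (y' - fy)))
    by (rewrite EP, EQ; ring).
  field. lra.
Qed.

Lemma incenter_of_proportional_sides (k q1 q2 q3 : R) (A B C : pt) :
  0 < k -> 0 < q1 + q2 + q3 ->
  pdist B C = k * q1 -> pdist C A = k * q2 -> pdist A B = k * q3 ->
  incenter A B C = ((q1 * fst A + q2 * fst B + q3 * fst C) / (q1 + q2 + q3),
                    (q1 * snd A + q2 * snd B + q3 * snd C) / (q1 + q2 + q3)).
Proof.
  intros hk hq E1 E2 E3. unfold incenter. rewrite E1, E2, E3.
  f_equal; field; nra.
Qed.

(** * The reflection law and the confocal caustic *)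

Lemma reflection_preserves_quadratic_form (nx ny m11 m12 m22 w1 w2 v1 v2 : R) :
  nx ^ 2 + ny ^ 2 <> 0 -> w1 ^ 2 + w2 ^ 2 = 1 -> v1 ^ 2 + v2 ^ 2 = 1 ->
  (w1 + v1) * ny - (w2 + v2) * nx = 0 ->
  ny * (m11 * nx + m12 * ny) = nx * (m12 * nx + m22 * ny) ->
  m11 * w1 ^ 2 + 2 * m12 * w1 * w2 + m22 * w2 ^ 2
  = m11 * v1 ^ 2 + 2 * m12 * v1 * v2 + m22 * v2 ^ 2.
Proof.
  intros hn hw hv hpar heig.
  (* The difference of the two forms is (w + v)^T M (w - v).  Expanding w + v and M n along
     n and n' = (ny, -nx), the n'-components vanish by hypothesis and what is left is a
     multiple of (w + v).(w - v) = |w|^2 - |v|^2 = 0. *)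
  set (N := nx ^ 2 + ny ^ 2).
  set (s1 := w1 + v1) in *. set (s2 := w2 + v2) in *.
  set (d1 := w1 - v1). set (d2 := w2 - v2).
  assert (hsd : s1 * d1 + s2 * d2 = 0) by (unfold s1, s2, d1, d2; nra).
  assert (key : N ^ 2 * ((m11 * s1 + m12 * s2) * d1 + (m12 * s1 + m22 * s2) * d2)
    = (nx * (m11 * nx + m12 * ny) + ny * (m12 * nx + m22 * ny))
        * (N * (s1 * d1 + s2 * d2) - (s1 * ny - s2 * nx) * (ny * d1 - nx * d2))
      + (s1 * nx + s2 * ny) * (ny * (m11 * nx + m12 * ny) - nx * (m12 * nx + m22 * ny))
        * (ny * d1 - nx * d2)
      + N * (s1 * ny - s2 * nx)
        * ((m11 * ny - m12 * nx) * d1 + (m12 * ny - m22 * nx) * d2)).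
  { unfold N. ring. }
  rewrite hsd, hpar in key.
  replace (ny * (m11 * nx + m12 * ny) - nx * (m12 * nx + m22 * ny)) with 0 in key by lra.
  assert (hN2 : N ^ 2 <> 0) by (apply pow_nonzero; exact hn).
  assert (hform : (m11 * s1 + m12 * s2) * d1 + (m12 * s1 + m22 * s2) * d2 = 0).
  { apply (Rmult_eq_reg_l (N ^ 2)); [lra | exact hN2]. }
  unfold s1, s2, d1, d2 in hform. nra.
Qed.

Definition confocal_form (c : R) (P Q : pt) : R :=
  (fst P * snd Q - fst Q * snd P) ^ 2 - c ^ 2 * (snd Q - snd P) ^ 2.

(* The line PQ is tangent to the conic x^2/(a^2 - lam) + y^2/(b^2 - lam) = 1, confocal with
   the ellipse when c^2 = a^2 - b^2, iff confocal_form c P Q = (b^2 - lam) |PQ|^2. *)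
Definition confocal_tangent (b c lam : R) (P Q : pt) : Prop :=
  confocal_form c P Q = (b ^ 2 - lam) * sqdist P Q.

Lemma ellipse_normal_neq_0 (a b x y : R) : a <> 0 -> b <> 0 ->
  x ^ 2 / a ^ 2 + y ^ 2 / b ^ 2 = 1 -> (x / a ^ 2) ^ 2 + (y / b ^ 2) ^ 2 <> 0.
Proof.
  intros ha hb hP Z.
  assert (hX : (x / a ^ 2) ^ 2 = 0) by (assert (h := pow2_ge_0 (y / b ^ 2)); nra).
  assert (hY : (y / b ^ 2) ^ 2 = 0) by (assert (h := pow2_ge_0 (x / a ^ 2)); nra).
  replace (x ^ 2 / a ^ 2 + y ^ 2 / b ^ 2)
    with (a ^ 2 * (x / a ^ 2) ^ 2 + b ^ 2 * (y / b ^ 2) ^ 2) in hP by (field; lra).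
  rewrite hX, hY in hP. lra.
Qed.

Lemma unit_direction (d ex ey : R) : 0 < d -> d ^ 2 = ex ^ 2 + ey ^ 2 ->
  (ex / d) ^ 2 + (ey / d) ^ 2 = 1.
Proof.
  intros hd E. replace 1 with (d ^ 2 / d ^ 2) by (field; lra). rewrite E at 1. field. lra.
Qed.

Lemma normal_bisects_confocal (a b c : R) (P Q S : pt) :
  a <> 0 -> b <> 0 -> c ^ 2 = a ^ 2 - b ^ 2 ->
  on_ellipse a b P -> P <> Q -> P <> S -> normal_bisects a b P Q S ->
  confocal_form c P Q * sqdist P S = confocal_form c P S * sqdist P Q.
Proof.
  intros ha hb hc2 hP hPQ hPS hbis.
  assert (lQ := pdist_pos _ _ hPQ). assert (lS := pdist_pos _ _ hPS).
  assert (EQ := pdist_sqr P Q). assert (ES := pdist_sqr P S).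
  unfold normal_bisects in hbis. unfold on_ellipse in hP.
  unfold confocal_form, sqdist in *.
  destruct P as [x y], Q as [xq yq], S as [xs ys]; cbn [fst snd] in *.
  set (l := pdist (x, y) (xq, yq)) in *. set (l' := pdist (x, y) (xs, ys)) in *.
  assert (hn := ellipse_normal_neq_0 a b x y ha hb hP).
  (* [confocal_form c P Q] is the quadratic form d |-> (P x d)^2 - c^2 d_y^2 of d = Q - P,
     with matrix [[y^2, -x y], [-x y, x^2 - c^2]]; since P lies on the ellipse and
     c^2 = a^2 - b^2, the normal (x / a^2, y / b^2) is an eigenvector of this matrix. *)
  assert (heig : y / b ^ 2 * (y ^ 2 * (x / a ^ 2) + - (x * y) * (y / b ^ 2))
                 = x / a ^ 2 * (- (x * y) * (x / a ^ 2) + (x ^ 2 - c ^ 2) * (y / b ^ 2))).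
  { apply Rminus_diag_uniq.
    transitivity (x * y / (a ^ 2 * b ^ 2)
                  * (c ^ 2 - (a ^ 2 - b ^ 2) * (x ^ 2 / a ^ 2 + y ^ 2 / b ^ 2))).
    - field. split; assumption.
    - rewrite hP, hc2. ring. }
  assert (hform := reflection_preserves_quadratic_form (x / a ^ 2) (y / b ^ 2)
    (y ^ 2) (- (x * y)) (x ^ 2 - c ^ 2)
    ((xq - x) / l) ((yq - y) / l) ((xs - x) / l') ((ys - y) / l') hn
    (unit_direction l (xq - x) (yq - y) lQ ltac:(rewrite EQ; ring))
    (unit_direction l' (xs - x) (ys - y) lS ltac:(rewrite ES; ring))
    ltac:(lra) heig).
  rewrite <- EQ, <- ES.
  transitivity (l ^ 2 * l' ^ 2 * (y ^ 2 * ((xs - x) / l') ^ 2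
    + 2 * - (x * y) * ((xs - x) / l') * ((ys - y) / l') + (x ^ 2 - c ^ 2) * ((ys - y) / l') ^ 2)).
  2:{ field. lra. }
  rewrite <- hform. field. lra.
Qed.

Lemma sqdist_sym (P Q : pt) : sqdist P Q = sqdist Q P.
Proof. unfold sqdist. ring. Qed.

Lemma confocal_tangent_sym (b c lam : R) (P Q : pt) :
  confocal_tangent b c lam P Q -> confocal_tangent b c lam Q P.
Proof.
  unfold confocal_tangent, confocal_form. rewrite sqdist_sym. intros E. rewrite <- E. ring.
Qed.

Lemma noncollinear_distinct (P Q S : pt) : noncollinear P Q S -> P <> Q /\ P <> S /\ Q <> S.
Proof. unfold noncollinear. intros h. repeat split; intros E; apply h; rewrite E; ring. Qed.

Lemma three_periodic_common_caustic (a b c : R) (P1 P2 P3 : pt) :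
  a <> 0 -> b <> 0 -> c ^ 2 = a ^ 2 - b ^ 2 -> three_periodic a b P1 P2 P3 ->
  exists lam, confocal_tangent b c lam P1 P2 /\ confocal_tangent b c lam P1 P3
              /\ confocal_tangent b c lam P2 P3.
Proof.
  intros ha hb hc2 (h1 & h2 & _ & hnc & hb1 & hb2 & _).
  destruct (noncollinear_distinct _ _ _ hnc) as (n12 & n13 & n23).
  assert (r1 := normal_bisects_confocal a b c P1 P2 P3 ha hb hc2 h1 n12 n13 hb1).
  assert (r2 := normal_bisects_confocal a b c P2 P3 P1 ha hb hc2 h2 n23 (not_eq_sym n12) hb2).
  assert (l12 := sqdist_pos _ _ n12).
  assert (k21 : confocal_form c P2 P1 = confocal_form c P1 P2) by (unfold confocal_form; ring).
  rewrite k21, (sqdist_sym P2 P1) in r2.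
  exists (b ^ 2 - confocal_form c P1 P2 / sqdist P1 P2). unfold confocal_tangent.
  repeat split.
  - field. lra.
  - apply (Rmult_eq_reg_r (sqdist P1 P2)); [rewrite <- r1; field|]; lra.
  - apply (Rmult_eq_reg_r (sqdist P1 P2)); [rewrite r2; field|]; lra.
Qed.

(** * Unit vectors and the complex unit circle *)

Definition on_unit_circle (u : C) : Prop := fst u ^ 2 + snd u ^ 2 = 1.

Definition dot (u v : C) : R := fst u * fst v + snd u * snd v.
Definition cross (u v : C) : R := fst u * snd v - snd u * fst v.

Section UnitVectors.
Variables u v : C.
Hypotheses (hu : on_unit_circle u) (hv : on_unit_circle v).

Lemma sqdist_units : sqdist u v = 2 * (1 - dot u v).
Proof. unfold on_unit_circle, sqdist, dot in *. nra. Qed.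

Lemma cross_sqr_units : cross u v ^ 2 = 1 - dot u v ^ 2.
Proof.
  transitivity ((fst u ^ 2 + snd u ^ 2) * (fst v ^ 2 + snd v ^ 2) - dot u v ^ 2).
  - unfold cross, dot. ring.
  - rewrite hu, hv. ring.
Qed.

Lemma cross_mul_sin_diff : cross u v * (snd v - snd u) = (fst u + fst v) * (1 - dot u v).
Proof.
  transitivity (fst u * (fst v ^ 2 + snd v ^ 2) + fst v * (fst u ^ 2 + snd u ^ 2)
                - (fst u + fst v) * dot u v).
  - unfold cross, dot. ring.
  - rewrite hu, hv. ring.
Qed.

Lemma cos_diff_sqr_units :
  (fst u - fst v) ^ 2 = (1 - dot u v) * (1 - fst u * fst v + snd u * snd v).
Proof.
  transitivity ((fst u - fst v) ^ 2 - snd v ^ 2 * (fst u ^ 2 + snd u ^ 2 - 1)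
                - (1 - fst u ^ 2) * (fst v ^ 2 + snd v ^ 2 - 1)).
  - rewrite hu, hv. ring.
  - unfold dot. ring.
Qed.

End UnitVectors.

Definition trig_form (K1 K2 K3 : R) (u v : C) : R := K1 * (fst u + fst v) + K2 * dot u v + K3.

Lemma unit_neq_0 (u : C) : on_unit_circle u -> u <> 0%C.
Proof. unfold on_unit_circle. intros hu E. rewrite E in hu. cbn in hu. lra. Qed.

Lemma Cconj_unit (u : C) : on_unit_circle u -> Cconj u = (/ u)%C.
Proof.
  intros hu. unfold Cinv. rewrite hu.
  apply injective_projections; cbn [fst snd Cconj]; field.
Qed.

Lemma Cmult_unit (u v : C) : on_unit_circle u -> on_unit_circle v ->
  on_unit_circle (u * v)%C.
Proof.
  intros hu hv. unfold on_unit_circle. simpl.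
  transitivity ((fst u ^ 2 + snd u ^ 2) * (fst v ^ 2 + snd v ^ 2)); [ring|].
  rewrite hu, hv. ring.
Qed.

Lemma Cmult_eq_0_r (x y : C) : (x * y = 0)%C -> x <> 0%C -> y = 0%C.
Proof.
  intros H hx. transitivity (/ x * (x * y))%C.
  - field. exact hx.
  - rewrite H. ring.
Qed.

Lemma Cminus_neq_0 (x y : C) : x <> y -> (x - y)%C <> 0%C.
Proof. intros H E. apply H. transitivity ((x - y) + y)%C; [ring|]. rewrite E. ring. Qed.

Definition biquadratic (K1 K2 K3 : R) (X Y : C) : C :=
  (K1 * (X + Y) * (1 + X * Y) + K2 * (X * X + Y * Y) + 2 * K3 * X * Y)%C.

Lemma biquadratic_units (K1 K2 K3 : R) (u v : C) :
  on_unit_circle u -> on_unit_circle v ->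
  biquadratic K1 K2 K3 u v = (2 * u * v * trig_form K1 K2 K3 u v)%C.
Proof.
  intros hu hv.
  assert (E : (2 * trig_form K1 K2 K3 u v
    = K1 * ((u + Cconj u) + (v + Cconj v)) + K2 * (u * Cconj v + Cconj u * v) + 2 * K3)%C).
  { unfold trig_form, dot, Cconj. apply injective_projections; simpl; ring. }
  replace (2 * u * v * trig_form K1 K2 K3 u v)%C
    with (u * v * (2 * trig_form K1 K2 K3 u v))%C by ring.
  rewrite E, !Cconj_unit by assumption.
  unfold biquadratic. field. split; apply unit_neq_0; assumption.
Qed.

Lemma biquadratic_three_roots (K1 K2 K3 : R) (X1 X2 X3 : C) :
  X1 <> X2 -> X1 <> X3 -> X2 <> X3 ->
  biquadratic K1 K2 K3 X1 X2 = 0%C -> biquadratic K1 K2 K3 X1 X3 = 0%C ->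
  biquadratic K1 K2 K3 X2 X3 = 0%C ->
  (K1 * (X1 + X2 + X3) - K2 + 2 * K3 = 0)%C /\ (K2 * (X1 + X2 + X3) + K1 = 0)%C.
Proof.
  intros n12 n13 n23 h12 h13 h23.
  (* divided differences of the three relations *)
  set (E1 := ((K1 * X1 + K2) * (X2 + X3) + K1 * X1 * X1 + 2 * K3 * X1 + K1)%C).
  set (E2 := ((K1 * X2 + K2) * (X1 + X3) + K1 * X2 * X2 + 2 * K3 * X2 + K1)%C).
  assert (hE1 : E1 = 0%C).
  { apply (Cmult_eq_0_r (X2 - X3)); [|now apply Cminus_neq_0].
    transitivity (biquadratic K1 K2 K3 X1 X2 - biquadratic K1 K2 K3 X1 X3)%C.
    - unfold E1, biquadratic. ring.
    - rewrite h12, h13. ring. }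
  assert (hE2 : E2 = 0%C).
  { apply (Cmult_eq_0_r (X1 - X3)); [|now apply Cminus_neq_0].
    transitivity (biquadratic K1 K2 K3 X1 X2 - biquadratic K1 K2 K3 X2 X3)%C.
    - unfold E2, biquadratic. ring.
    - rewrite h12, h23. ring. }
  assert (R1 : (K1 * (X1 + X2 + X3) - K2 + 2 * K3 = 0)%C).
  { apply (Cmult_eq_0_r (X1 - X2)); [|now apply Cminus_neq_0].
    transitivity (E1 - E2)%C.
    - unfold E1, E2. ring.
    - rewrite hE1, hE2. ring. }
  split; [exact R1|].
  transitivity (E1 - (K1 * (X1 + X2 + X3) - K2 + 2 * K3) * X1)%C.
  - unfold E1. ring.
  - rewrite hE1, R1. ring.
Qed.

Lemma trig_form_three_zeros (K1 K2 K3 : R) (u1 u2 u3 : C) :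
  on_unit_circle u1 -> on_unit_circle u2 -> on_unit_circle u3 ->
  u1 <> u2 -> u1 <> u3 -> u2 <> u3 -> K2 <> 0 ->
  trig_form K1 K2 K3 u1 u2 = 0 -> trig_form K1 K2 K3 u1 u3 = 0 -> trig_form K1 K2 K3 u2 u3 = 0 ->
  snd u1 + snd u2 + snd u3 = 0 /\ K2 * (fst u1 + fst u2 + fst u3) = - K1
  /\ K1 * (fst u1 + fst u2 + fst u3) + 2 * K3 = K2.
Proof.
  intros h1 h2 h3 n12 n13 n23 hK2 t12 t13 t23.
  assert (root : forall u v, on_unit_circle u -> on_unit_circle v ->
    trig_form K1 K2 K3 u v = 0 -> biquadratic K1 K2 K3 u v = 0%C).
  { intros u v hu hv huv. rewrite biquadratic_units, huv by assumption. ring. }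
  destruct (biquadratic_three_roots K1 K2 K3 u1 u2 u3 n12 n13 n23
    (root _ _ h1 h2 t12) (root _ _ h1 h3 t13) (root _ _ h2 h3 t23)) as [R1 R2].
  apply (f_equal fst) in R1. apply (f_equal fst) in R2 as R2x. apply (f_equal snd) in R2 as R2y.
  simpl in R1, R2x, R2y.
  assert (hs : snd u1 + snd u2 + snd u3 = 0).
  { apply (Rmult_eq_reg_l K2); [lra | exact hK2]. }
  repeat split; [exact hs | lra | lra].
Qed.

Lemma chord_sum_units (u1 u2 u3 : C) :
  on_unit_circle u1 -> on_unit_circle u2 -> on_unit_circle u3 ->
  sqdist u2 u3 + sqdist u3 u1 + sqdist u1 u2
  = 9 - (fst u1 + fst u2 + fst u3) ^ 2 - (snd u1 + snd u2 + snd u3) ^ 2.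
Proof.
  intros h1 h2 h3. unfold sqdist.
  transitivity (3 * ((fst u1 ^ 2 + snd u1 ^ 2) + (fst u2 ^ 2 + snd u2 ^ 2)
                     + (fst u3 ^ 2 + snd u3 ^ 2))
    - (fst u1 + fst u2 + fst u3) ^ 2 - (snd u1 + snd u2 + snd u3) ^ 2); [ring|].
  rewrite h1, h2, h3. ring.
Qed.

Lemma weighted_chord_sum (a c t : R) (U1 U2 U3 : C) :
  U1 <> 0%C -> U2 <> 0%C -> U3 <> 0%C ->
  (U1 + U2 + U3 = t)%C -> (/ U1 + / U2 + / U3 = t)%C ->
  ((U2 - U3) * (/ U2 - / U3) * U1 * (2 * a - c * (U1 + / U1))
   + (U3 - U1) * (/ U3 - / U1) * U2 * (2 * a - c * (U2 + / U2))
   + (U1 - U2) * (/ U1 - / U2) * U3 * (2 * a - c * (U3 + / U3))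
   = - RtoC (c * t ^ 2 - 4 * a * t + 3 * c) * (3 - t * (U1 * U2 * U3)))%C.
Proof.
  intros h1 h2 h3 hsum hinv.
  (* e2 = e3 (/U1 + /U2 + /U3) = t e3, and the left-hand side is symmetric: it is a rational
     function of e1 = t and e3 alone *)
  assert (he2 : (U1 * U2 + U1 * U3 + U2 * U3 = t * (U1 * U2 * U3))%C).
  { rewrite <- hinv. field. auto. }
  transitivity (- (4 * a * ((U1 * U2 + U1 * U3 + U2 * U3) * (U1 * U2 + U1 * U3 + U2 * U3)
                  - 3 * (U1 + U2 + U3) * (U1 * U2 * U3))
     - c * ((U1 + U2 + U3) * (U1 * U2 + U1 * U3 + U2 * U3) * (U1 * U2 + U1 * U3 + U2 * U3)
            - 4 * (U1 + U2 + U3) * (U1 + U2 + U3) * (U1 * U2 * U3)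
            + 3 * (U1 * U2 + U1 * U3 + U2 * U3) * (U1 * U2 * U3)
            + (U1 + U2 + U3) * (U1 * U2 + U1 * U3 + U2 * U3) - 9 * (U1 * U2 * U3)))
     / (U1 * U2 * U3))%C.
  { field. auto. }
  rewrite he2, hsum. replace (t ^ 2) with (t * t) by ring.
  rewrite !RtoC_plus, !RtoC_minus, !RtoC_mult. field. auto.
Qed.

Lemma weighted_focal_sum (a c t : R) (u1 u2 u3 : C) :
  on_unit_circle u1 -> on_unit_circle u2 -> on_unit_circle u3 ->
  fst u1 + fst u2 + fst u3 = t -> snd u1 + snd u2 + snd u3 = 0 ->
  (sqdist u2 u3 * (a - c * fst u1) * u1 + sqdist u3 u1 * (a - c * fst u2) * u2
   + sqdist u1 u2 * (a - c * fst u3) * u3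
   = - RtoC ((c * t ^ 2 - 4 * a * t + 3 * c) / 2) * (3 - t * (u1 * u2 * u3)))%C.
Proof.
  intros h1 h2 h3 hc hs.
  assert (hsum : (u1 + u2 + u3 = t)%C) by (apply injective_projections; simpl; lra).
  assert (hinv : (/ u1 + / u2 + / u3 = t)%C).
  { rewrite <- !Cconj_unit by assumption. apply injective_projections; simpl; lra. }
  assert (W := weighted_chord_sum a c t u1 u2 u3
    (unit_neq_0 _ h1) (unit_neq_0 _ h2) (unit_neq_0 _ h3) hsum hinv).
  rewrite <- !Cconj_unit in W by assumption.
  apply (f_equal fst) in W as Wx. apply (f_equal snd) in W as Wy.
  unfold sqdist, Cconj in *.
  apply injective_projections; simpl in *; lra.
Qed.

(** * Focal polar coordinates *)

Definition focal_point (c r : R) (u : C) : pt := (- c + r * fst u, r * snd u).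

Lemma pdist_focal_point (c r : R) (u : C) : 0 <= r -> on_unit_circle u ->
  pdist (focal_point c r u) (- c, 0) = r.
Proof.
  intros hr hu. apply pdist_eq; [exact hr|].
  unfold sqdist, focal_point; cbn [fst snd].
  transitivity (r ^ 2 * (fst u ^ 2 + snd u ^ 2)); [ring|]. rewrite hu. ring.
Qed.

Lemma invert_focal_point (c rho r : R) (u : C) : 0 < r -> on_unit_circle u ->
  invert (- c, 0) rho (focal_point c r u) = focal_point c (rho ^ 2 / r) u.
Proof.
  intros hr hu. unfold invert. rewrite pdist_focal_point; [| lra | exact hu].
  unfold focal_point; cbn [fst snd]. f_equal; field; lra.
Qed.

Lemma sqdist_focal_points (c r r' : R) (u v : C) :
  on_unit_circle u -> on_unit_circle v ->
  sqdist (focal_point c r u) (focal_point c r' v) = r ^ 2 + r' ^ 2 - 2 * r * r' * dot u v.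
Proof.
  intros hu hv. unfold sqdist, focal_point, dot; cbn [fst snd].
  transitivity (r ^ 2 * (fst u ^ 2 + snd u ^ 2) + r' ^ 2 * (fst v ^ 2 + snd v ^ 2)
                - 2 * r * r' * (fst u * fst v + snd u * snd v)); [ring|].
  rewrite hu, hv. ring.
Qed.

Lemma confocal_form_focal_points (c r r' : R) (u v : C) :
  confocal_form c (focal_point c r u) (focal_point c r' v)
  = (r * r') ^ 2 * cross u v ^ 2 - 2 * c * r * r' * cross u v * (r' * snd v - r * snd u).
Proof. unfold confocal_form, focal_point, cross; cbn [fst snd]. ring. Qed.

(** * The cosine sum and the circle *)

Lemma caustic_cosine_quadratic (a b c lam t : R) : a <> 0 -> b <> 0 ->
  (a ^ 2 * b ^ 2 + lam * c ^ 2) * t = 2 * a * c * lam ->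
  - 2 * a * c * lam * t + 2 * (lam * (c ^ 2 + 2 * a ^ 2) - a ^ 2 * b ^ 2)
  = a ^ 2 * b ^ 2 + lam * c ^ 2 ->
  a * c * t ^ 2 - 2 * (a ^ 2 + c ^ 2) * t + 3 * a * c = 0.
Proof.
  intros ha hb E1 E2.
  assert (key : 2 * a ^ 2 * b ^ 2 * (a * c * t ^ 2 - 2 * (a ^ 2 + c ^ 2) * t + 3 * a * c)
    = (c ^ 2 + 4 * a ^ 2 - 2 * a * c * t) * (2 * a * c * lam - (a ^ 2 * b ^ 2 + lam * c ^ 2) * t)
      - (2 * a * c - c ^ 2 * t)
        * (- 2 * a * c * lam * t + 2 * (lam * (c ^ 2 + 2 * a ^ 2) - a ^ 2 * b ^ 2)
           - (a ^ 2 * b ^ 2 + lam * c ^ 2))) by ring.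
  rewrite E1, E2, !Rminus_diag, !Rmult_0_r, Rminus_0_r in key.
  apply Rmult_integral in key as [Z | Z]; [|exact Z].
  exfalso. assert (0 < a ^ 2 * b ^ 2) by (apply Rmult_lt_0_compat; apply pow2_gt_0; assumption).
  lra.
Qed.

Lemma cosine_sum_root (a b c t : R) : 0 < b -> 0 < c -> c < a -> c ^ 2 = a ^ 2 - b ^ 2 ->
  t ^ 2 < 9 -> a * c * t ^ 2 - 2 * (a ^ 2 + c ^ 2) * t + 3 * a * c = 0 ->
  delta a b = a ^ 2 + c ^ 2 - a * c * t.
Proof.
  intros hb hc hca hc2 ht hq.
  assert (hpos : 0 <= a ^ 4 - a ^ 2 * b ^ 2 + b ^ 4) by nra.
  assert (hd2 : delta a b ^ 2 = a ^ 4 - a ^ 2 * b ^ 2 + b ^ 4) by (apply pow2_sqrt; exact hpos).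
  assert (hd0 : 0 <= delta a b) by apply sqrt_pos.
  (* the other root a c t = a^2 + c^2 + delta exceeds 3 a c, since delta > a c *)
  assert (hdac : a * c < delta a b).
  { assert (delta a b ^ 2 - (a * c) ^ 2 = b ^ 4).
    { rewrite hd2. replace ((a * c) ^ 2) with (a ^ 2 * c ^ 2) by ring. rewrite hc2. ring. }
    assert (0 < b ^ 4) by (apply pow_lt; lra). nra. }
  assert (hroots : (a * c * t - (a ^ 2 + c ^ 2) - delta a b)
                   * (a * c * t - (a ^ 2 + c ^ 2) + delta a b) = 0).
  { transitivity (a * c * (a * c * t ^ 2 - 2 * (a ^ 2 + c ^ 2) * t + 3 * a * c)
                  + (a ^ 4 - a ^ 2 * b ^ 2 + b ^ 4) - delta a b ^ 2).
    - replace (b ^ 4) with ((b ^ 2) ^ 2) by ring. replace (b ^ 2) with (a ^ 2 - c ^ 2) by lra. ring.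
    - rewrite hq, hd2. ring. }
  apply Rmult_integral in hroots as [Z | Z]; [|lra].
  exfalso. assert (t < 3) by nra.
  assert (a * c * t < a * c * 3) by (apply Rmult_lt_compat_l; nra).
  assert (0 <= (a - c) ^ 2) by apply pow2_ge_0. nra.
Qed.

Lemma incircle_center_abscissa (a b c t rho : R) : 0 < b -> 0 < c -> c < a ->
  c ^ 2 = a ^ 2 - b ^ 2 -> t ^ 2 < 9 ->
  a * c * t ^ 2 - 2 * (a ^ 2 + c ^ 2) * t + 3 * a * c = 0 ->
  delta a b = a ^ 2 + c ^ 2 - a * c * t ->
  - c + 3 * (rho ^ 2 * t / (a * (9 - t ^ 2)))
  = c * (-1 + rho ^ 2 * (- 2 * a ^ 2 + b ^ 2 + 2 * delta a b) / (2 * b ^ 4)).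
Proof.
  intros hb hc hca hc2 ht hq hd. rewrite hd.
  assert (ha : 0 < a) by lra. assert (h9 : 0 < 9 - t ^ 2) by lra.
  assert (hb4 : 0 < b ^ 4) by (apply pow_lt; lra).
  assert (E : 6 * b ^ 4 * t
              = a * c * (9 - t ^ 2) * (- 2 * a ^ 2 + b ^ 2 + 2 * (a ^ 2 + c ^ 2 - a * c * t))).
  { transitivity (a * c * (9 - t ^ 2) * (- 2 * a ^ 2 + b ^ 2 + 2 * (a ^ 2 + c ^ 2 - a * c * t))
      - (2 * a * c * t + 3 * (a ^ 2 + c ^ 2))
        * (a * c * t ^ 2 - 2 * (a ^ 2 + c ^ 2) * t + 3 * a * c)).
    - replace (b ^ 4) with ((b ^ 2) ^ 2) by ring. replace (b ^ 2) with (a ^ 2 - c ^ 2) by lra. ring.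
    - rewrite hq. ring. }
  transitivity (- c + rho ^ 2 * (6 * b ^ 4 * t) / (2 * b ^ 4 * a * (9 - t ^ 2))).
  - field. lra.
  - rewrite E. field. lra.
Qed.

Lemma incircle_radius (a b c t rho : R) : 0 < b -> 0 < c -> c < a ->
  c ^ 2 = a ^ 2 - b ^ 2 -> t ^ 2 < 9 ->
  a * c * t ^ 2 - 2 * (a ^ 2 + c ^ 2) * t + 3 * a * c = 0 ->
  delta a b = a ^ 2 + c ^ 2 - a * c * t ->
  rho ^ 2 * t / (a * (9 - t ^ 2)) * t
  = rho ^ 2 * (- 2 * delta a b ^ 2 + b ^ 4 + (2 * a ^ 2 - b ^ 2) * delta a b) / (2 * a * b ^ 4).
Proof.
  intros hb hc hca hc2 ht hq hd. rewrite hd.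
  assert (ha : 0 < a) by lra. assert (h9 : 0 < 9 - t ^ 2) by lra.
  assert (hb4 : 0 < b ^ 4) by (apply pow_lt; lra).
  set (d := a ^ 2 + c ^ 2 - a * c * t).
  assert (E : 2 * b ^ 4 * t ^ 2 = (9 - t ^ 2) * (- 2 * d ^ 2 + b ^ 4 + (2 * a ^ 2 - b ^ 2) * d)).
  { transitivity ((9 - t ^ 2) * (- 2 * d ^ 2 + b ^ 4 + (2 * a ^ 2 - b ^ 2) * d)
      - (2 * a * c * t ^ 2 + (a ^ 2 + c ^ 2) * t - 12 * a * c)
        * (a * c * t ^ 2 - 2 * (a ^ 2 + c ^ 2) * t + 3 * a * c)).
    - unfold d. replace (b ^ 4) with ((b ^ 2) ^ 2) by ring.
      replace (b ^ 2) with (a ^ 2 - c ^ 2) by lra. ring.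
    - rewrite hq. ring. }
  transitivity (rho ^ 2 * (2 * b ^ 4 * t ^ 2) / (2 * a * b ^ 4 * (9 - t ^ 2))).
  - field. lra.
  - rewrite E. field. lra.
Qed.

Lemma pdist_incircle (f k t : R) (tau : C) : on_unit_circle tau -> 0 <= k * t ->
  pdist (RtoC f + RtoC k * (3 - t * tau))%C (f + 3 * k, 0) = k * t.
Proof.
  intros htau hkt. apply pdist_eq; [exact hkt|].
  unfold sqdist. simpl.
  transitivity ((k * t) ^ 2 * (fst tau ^ 2 + snd tau ^ 2)); [ring|]. rewrite htau. ring.
Qed.

(** * Chords of the ellipse and the focus-inversive triangle *)

Section FocalChords.
Variables a b c : R.
Hypotheses (hb : 0 < b) (hc : 0 < c) (hca : c < a) (hc2 : c ^ 2 = a ^ 2 - b ^ 2).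

Definition focal_radius (u : C) : R := b ^ 2 / (a - c * fst u).

Definition ellipse_point (u : C) : pt := focal_point c (focal_radius u) u.

Lemma focal_denom_pos (u : C) : on_unit_circle u -> 0 < a - c * fst u.
Proof.
  unfold on_unit_circle. intros hu.
  assert (fst u <= 1) by nra. assert (- 1 <= fst u) by nra. nra.
Qed.

Lemma focal_radius_pos (u : C) : on_unit_circle u -> 0 < focal_radius u.
Proof.
  intros hu. apply Rdiv_lt_0_compat; [nra | exact (focal_denom_pos u hu)].
Qed.

Lemma ellipse_point_surj (P : pt) : on_ellipse a b P ->
  exists u : C, on_unit_circle u /\ P = ellipse_point u.
Proof.
  destruct P as [x y]. unfold on_ellipse; cbn [fst snd]. intros hP.
  assert (ha : 0 < a) by lra.
  assert (hy : y ^ 2 = b ^ 2 * (1 - x ^ 2 / a ^ 2)).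
  { replace (1 - x ^ 2 / a ^ 2) with (y ^ 2 / b ^ 2) by lra. field. lra. }
  assert (hx : x ^ 2 <= a ^ 2).
  { assert (0 <= y ^ 2 / b ^ 2).
    { apply Rdiv_le_0_compat; [apply pow2_ge_0 | nra]. }
    replace (x ^ 2) with (a ^ 2 * (x ^ 2 / a ^ 2)) by (field; lra). nra. }
  (* the focal distance |P - f1| = a + c x / a *)
  set (r := a + c * x / a).
  assert (hr : 0 < r).
  { unfold r. assert (- a <= x <= a) by (split; nra).
    replace (c * x / a) with (c * (x / a)) by (field; lra).
    assert (- 1 <= x / a).
    { apply (Rmult_le_reg_r a); [lra|]. replace (x / a * a) with x by (field; lra). lra. }
    nra. }
  exists ((x + c) / r, y / r).
  assert (hdist : (x + c) ^ 2 + y ^ 2 = r ^ 2).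
  { unfold r. rewrite hy. replace (b ^ 2) with (a ^ 2 - c ^ 2) by lra. field. lra. }
  cbn [fst snd]. split.
  - unfold on_unit_circle; cbn [fst snd].
    replace 1 with (r ^ 2 / r ^ 2) by (field; lra). rewrite <- hdist at 1. field. lra.
  - assert (hrad : focal_radius ((x + c) / r, y / r) = r).
    { unfold focal_radius; cbn [fst snd].
      assert (har : a * r = a ^ 2 + c * x) by (unfold r; field; lra).
      replace (a - c * ((x + c) / r)) with ((a * r - c * (x + c)) / r) by (field; lra).
      replace (a * r - c * (x + c)) with (b ^ 2) by nra.
      field. split; lra. }
    unfold ellipse_point, focal_point. rewrite hrad; cbn [fst snd]. f_equal; field; lra.
Qed.

(* [confocal_form_ellipse_chord] below, rescaled by the focal radii b^2 / (a - c u_x) *)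
Lemma focal_chord_identity (u v : C) :
  on_unit_circle u -> on_unit_circle v ->
  (a - c * fst u) ^ 2 + (a - c * fst v) ^ 2 - 2 * dot u v * (a - c * fst u) * (a - c * fst v)
  - b ^ 2 * cross u v ^ 2 + 2 * c * cross u v * ((a - c * fst u) * snd v - (a - c * fst v) * snd u)
  = a ^ 2 * (1 - dot u v) ^ 2.
Proof.
  intros hu hv.
  transitivity (c ^ 2 * (fst u - fst v) ^ 2 + 2 * (1 - dot u v) * (a - c * fst u) * (a - c * fst v)
    - (b ^ 2 + 2 * c ^ 2) * cross u v ^ 2 + 2 * a * c * (cross u v * (snd v - snd u))).
  { unfold dot, cross. ring. }
  rewrite cos_diff_sqr_units, cross_sqr_units, cross_mul_sin_diff by assumption.
  replace (b ^ 2) with (a ^ 2 - c ^ 2) by lra. unfold dot. ring.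
Qed.

Lemma confocal_form_ellipse_chord (u v : C) :
  on_unit_circle u -> on_unit_circle v ->
  b ^ 2 * (b ^ 2 * sqdist (ellipse_point u) (ellipse_point v)
           - confocal_form c (ellipse_point u) (ellipse_point v))
  = (a * sqdist u v * focal_radius u * focal_radius v / 2) ^ 2.
Proof.
  intros hu hv.
  assert (du := focal_denom_pos u hu). assert (dv := focal_denom_pos v hv).
  unfold ellipse_point.
  rewrite sqdist_focal_points, confocal_form_focal_points, (sqdist_units u v) by assumption.
  unfold focal_radius.
  transitivity (b ^ 8 / ((a - c * fst u) ^ 2 * (a - c * fst v) ^ 2) *
    ((a - c * fst u) ^ 2 + (a - c * fst v) ^ 2 - 2 * dot u v * (a - c * fst u) * (a - c * fst v)
     - b ^ 2 * cross u v ^ 2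
     + 2 * c * cross u v * ((a - c * fst u) * snd v - (a - c * fst v) * snd u))).
  { field. lra. }
  rewrite focal_chord_identity by assumption. field. lra.
Qed.

Lemma tangent_chord_length (lam : R) (u v : C) :
  on_unit_circle u -> on_unit_circle v ->
  confocal_tangent b c lam (ellipse_point u) (ellipse_point v) ->
  4 * b ^ 2 * lam * sqdist (ellipse_point u) (ellipse_point v)
  = (a * sqdist u v * focal_radius u * focal_radius v) ^ 2.
Proof.
  intros hu hv htan.
  assert (E := confocal_form_ellipse_chord u v hu hv). rewrite htan in E. lra.
Qed.

Lemma tangent_chord_trig_form (lam : R) (u v : C) :
  on_unit_circle u -> on_unit_circle v -> u <> v ->
  confocal_tangent b c lam (ellipse_point u) (ellipse_point v) ->
  trig_form (- 2 * a * c * lam) (a ^ 2 * b ^ 2 + lam * c ^ 2)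
            (lam * (c ^ 2 + 2 * a ^ 2) - a ^ 2 * b ^ 2) u v = 0.
Proof.
  intros hu hv huv htan.
  assert (hdu := focal_denom_pos u hu). assert (hdv := focal_denom_pos v hv).
  assert (hq := sqdist_pos u v huv). rewrite sqdist_units in hq by assumption.
  assert (hL := tangent_chord_length lam u v hu hv htan).
  unfold ellipse_point in hL. rewrite sqdist_focal_points in hL by assumption.
  rewrite sqdist_units in hL by assumption. unfold focal_radius in hL.
  set (du := a - c * fst u) in *. set (dv := a - c * fst v) in *.
  assert (hlen : lam * (du ^ 2 + dv ^ 2 - 2 * dot u v * du * dv)
                 = a ^ 2 * b ^ 2 * (1 - dot u v) ^ 2).
  { apply (Rmult_eq_reg_l (4 * b ^ 6 / (du ^ 2 * dv ^ 2))).
    - transitivity (4 * b ^ 2 * lam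
        * ((b ^ 2 / du) ^ 2 + (b ^ 2 / dv) ^ 2 - 2 * (b ^ 2 / du) * (b ^ 2 / dv) * dot u v)).
      + field. lra.
      + rewrite hL. field. lra.
    - apply Rgt_not_eq, Rdiv_lt_0_compat.
      + assert (0 < b ^ 6) by (apply pow_lt; lra). lra.
      + apply Rmult_lt_0_compat; apply pow_lt; lra. }
  assert (hsplit : du ^ 2 + dv ^ 2 - 2 * dot u v * du * dv
    = (1 - dot u v) * (c ^ 2 * (1 - fst u * fst v + snd u * snd v) + 2 * du * dv)).
  { transitivity (c ^ 2 * (fst u - fst v) ^ 2 + 2 * (1 - dot u v) * du * dv).
    - unfold du, dv, dot. ring.
    - rewrite cos_diff_sqr_units by assumption. ring. }
  rewrite hsplit in hlen.
  assert (hB : lam * (c ^ 2 * (1 - fst u * fst v + snd u * snd v) + 2 * du * dv)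
               = a ^ 2 * b ^ 2 * (1 - dot u v)).
  { apply (Rmult_eq_reg_l (1 - dot u v)); lra. }
  unfold trig_form, dot in *. unfold du, dv in hB. lra.
Qed.

Lemma caustic_parameter_pos (lam : R) (u v : C) :
  on_unit_circle u -> on_unit_circle v -> u <> v ->
  confocal_tangent b c lam (ellipse_point u) (ellipse_point v) -> 0 < lam.
Proof.
  intros hu hv huv htan.
  assert (hL := tangent_chord_length lam u v hu hv htan).
  assert (hq := sqdist_pos u v huv).
  assert (ru := focal_radius_pos u hu). assert (rv := focal_radius_pos v hv).
  assert (hX : 0 < (a * sqdist u v * focal_radius u * focal_radius v) ^ 2).
  { apply pow_lt.
    apply Rmult_lt_0_compat; [apply Rmult_lt_0_compat; [apply Rmult_lt_0_compat|]|]; lra. }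
  assert (h0 : 0 <= 4 * b ^ 2 * sqdist (ellipse_point u) (ellipse_point v)).
  { assert (0 < b ^ 2) by nra.
    assert (h := sqdist_nonneg (ellipse_point u) (ellipse_point v)). nra. }
  nra.
Qed.

Lemma inverted_side (lam rho : R) (u v : C) :
  on_unit_circle u -> on_unit_circle v -> 0 < lam ->
  confocal_tangent b c lam (ellipse_point u) (ellipse_point v) ->
  pdist (invert (- c, 0) rho (ellipse_point u)) (invert (- c, 0) rho (ellipse_point v))
  = rho ^ 2 * a / (2 * b * sqrt lam) * sqdist u v.
Proof.
  intros hu hv hlam htan.
  assert (ru := focal_radius_pos u hu). assert (rv := focal_radius_pos v hv).
  assert (fu : pdist (ellipse_point u) (- c, 0) = focal_radius u)
    by (apply pdist_focal_point; [lra | exact hu]).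
  assert (fv : pdist (ellipse_point v) (- c, 0) = focal_radius v)
    by (apply pdist_focal_point; [lra | exact hv]).
  assert (nu := pdist_pos_neq _ _ ltac:(rewrite fu; exact ru)).
  assert (nv := pdist_pos_neq _ _ ltac:(rewrite fv; exact rv)).
  assert (hs : 0 < sqrt lam) by (apply sqrt_lt_R0; exact hlam).
  assert (hs2 : sqrt lam ^ 2 = lam) by (apply pow2_sqrt; lra).
  assert (hq := sqdist_nonneg u v).
  assert (hL := tangent_chord_length lam u v hu hv htan).
  rewrite pdist_invert, fu, fv by assumption.
  rewrite (pdist_eq _ _ (a * sqdist u v * focal_radius u * focal_radius v / (2 * b * sqrt lam))).
  - field. repeat split; lra.
  - apply Rdiv_le_0_compat; [|nra].
    apply Rmult_le_pos; [apply Rmult_le_pos; [apply Rmult_le_pos|]|]; lra.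
  - apply (Rmult_eq_reg_l (4 * b ^ 2 * lam)).
    + rewrite hL, <- hs2 at 1. field. lra.
    + apply Rgt_not_eq, Rmult_lt_0_compat; nra.
Qed.

Section CausticTriangle.
Variables (u1 u2 u3 : C) (lam : R).
Hypotheses (h1 : on_unit_circle u1) (h2 : on_unit_circle u2)
  (h3 : on_unit_circle u3) (n12 : u1 <> u2) (n13 : u1 <> u3) (n23 : u2 <> u3)
  (t12 : confocal_tangent b c lam (ellipse_point u1) (ellipse_point u2))
  (t13 : confocal_tangent b c lam (ellipse_point u1) (ellipse_point u3))
  (t23 : confocal_tangent b c lam (ellipse_point u2) (ellipse_point u3)).

Lemma caustic_cosine_sum :
  snd u1 + snd u2 + snd u3 = 0 /\
  a * c * (fst u1 + fst u2 + fst u3) ^ 2 - 2 * (a ^ 2 + c ^ 2) * (fst u1 + fst u2 + fst u3)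
  + 3 * a * c = 0.
Proof.
  assert (hlam := caustic_parameter_pos lam u1 u2 h1 h2 n12 t12).
  assert (hK2 : a ^ 2 * b ^ 2 + lam * c ^ 2 <> 0).
  { assert (0 < a ^ 2 * b ^ 2) by (apply Rmult_lt_0_compat; apply pow_lt; lra).
    assert (0 < lam * c ^ 2) by (apply Rmult_lt_0_compat; [|apply pow_lt]; lra).
    lra. }
  destruct (trig_form_three_zeros _ _ _ u1 u2 u3 h1 h2 h3 n12 n13 n23 hK2
    (tangent_chord_trig_form lam u1 u2 h1 h2 n12 t12)
    (tangent_chord_trig_form lam u1 u3 h1 h3 n13 t13)
    (tangent_chord_trig_form lam u2 u3 h2 h3 n23 t23)) as (hs & E1 & E2).
  split; [exact hs|].
  apply (caustic_cosine_quadratic a b c lam); lra.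
Qed.

Lemma cosine_sum_sqr_lt_9 : (fst u1 + fst u2 + fst u3) ^ 2 < 9.
Proof.
  destruct caustic_cosine_sum as [hs _].
  assert (E := chord_sum_units u1 u2 u3 h1 h2 h3). rewrite hs in E.
  assert (q1 := sqdist_pos _ _ n23). assert (q2 := sqdist_pos _ _ (not_eq_sym n13)).
  assert (q3 := sqdist_pos _ _ n12). lra.
Qed.

Lemma focus_inversive_incenter (rho : R) : 0 < rho ->
  let t := fst u1 + fst u2 + fst u3 in
  incenter (invert (- c, 0) rho (ellipse_point u1)) (invert (- c, 0) rho (ellipse_point u2))
           (invert (- c, 0) rho (ellipse_point u3))
  = (RtoC (- c) + RtoC (rho ^ 2 * t / (a * (9 - t ^ 2))) * (3 - t * (u1 * u2 * u3)))%C.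
Proof.
  intros hrho t.
  destruct caustic_cosine_sum as [hs hq]. fold t in hq.
  assert (ht := cosine_sum_sqr_lt_9). fold t in ht.
  assert (hlam := caustic_parameter_pos lam u1 u2 h1 h2 n12 t12).
  assert (hsum := chord_sum_units u1 u2 u3 h1 h2 h3). rewrite hs in hsum. fold t in hsum.
  rewrite (incenter_of_proportional_sides (rho ^ 2 * a / (2 * b * sqrt lam))
    (sqdist u2 u3) (sqdist u3 u1) (sqdist u1 u2)).
  2:{ assert (0 < sqrt lam) by (apply sqrt_lt_R0; exact hlam).
      apply Rdiv_lt_0_compat; [|nra]. assert (0 < rho ^ 2) by nra. nra. }
  2:{ lra. }
  2:{ apply inverted_side; assumption. }
  2:{ apply inverted_side; try assumption. apply confocal_tangent_sym. exact t13. }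
  2:{ apply inverted_side; assumption. }
  unfold ellipse_point. rewrite !invert_focal_point by (try apply focal_radius_pos; assumption).
  assert (W := weighted_focal_sum a c t u1 u2 u3 h1 h2 h3 eq_refl hs).
  assert (hm : (c * t ^ 2 - 4 * a * t + 3 * c) / 2 = - (b ^ 2 * t / a)).
  { apply (Rmult_eq_reg_l (2 * a)); [|lra].
    transitivity (a * c * t ^ 2 - 2 * (a ^ 2 + c ^ 2) * t + 3 * a * c + 2 * (c ^ 2 - a ^ 2) * t).
    - field.
    - rewrite hq, hc2. field. lra. }
  rewrite hm in W.
  assert (hd1 := focal_denom_pos u1 h1). assert (hd2 := focal_denom_pos u2 h2).
  assert (hd3 := focal_denom_pos u3 h3).
  transitivity (RtoC (- c) + RtoC (rho ^ 2 / (b ^ 2 * (sqdist u2 u3 + sqdist u3 u1 + sqdist u1 u2)))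
     * (sqdist u2 u3 * (a - c * fst u1) * u1 + sqdist u3 u1 * (a - c * fst u2) * u2
        + sqdist u1 u2 * (a - c * fst u3) * u3))%C.
  { unfold focal_point, focal_radius.
    apply injective_projections; simpl; field; repeat split; lra. }
  rewrite W, hsum. f_equal. rewrite Cmult_assoc. f_equal.
  apply injective_projections; simpl; field; lra.
Qed.

Lemma focus_inversive_incircle (rho : R) : 0 < rho ->
  pdist (incenter (invert (- c, 0) rho (ellipse_point u1)) (invert (- c, 0) rho (ellipse_point u2))
                  (invert (- c, 0) rho (ellipse_point u3)))
        (c * (-1 + rho ^ 2 * (- 2 * a ^ 2 + b ^ 2 + 2 * delta a b) / (2 * b ^ 4)), 0)
  = rho ^ 2 * (- 2 * delta a b ^ 2 + b ^ 4 + (2 * a ^ 2 - b ^ 2) * delta a b) / (2 * a * b ^ 4).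
Proof.
  intros hrho.
  destruct caustic_cosine_sum as [_ hq]. assert (ht := cosine_sum_sqr_lt_9).
  pose proof (focus_inversive_incenter rho hrho) as E. cbv zeta in E. rewrite E.
  set (t := fst u1 + fst u2 + fst u3) in *.
  assert (hd := cosine_sum_root a b c t hb hc hca hc2 ht hq).
  rewrite <- (incircle_center_abscissa a b c t rho hb hc hca hc2 ht hq hd),
    <- (incircle_radius a b c t rho hb hc hca hc2 ht hq hd).
  apply pdist_incircle.
  - repeat apply Cmult_unit; assumption.
  - replace (rho ^ 2 * t / (a * (9 - t ^ 2)) * t) with (rho ^ 2 * t ^ 2 / (a * (9 - t ^ 2)))
      by (field; lra).
    apply Rdiv_le_0_compat; [|nra]. apply Rmult_le_pos; apply pow2_ge_0.
Qed.

End CausticTriangle.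

End FocalChords.

Theorem mainTheorem10 (a b rho : R) (hb : 0 < b) (hab : b < a) (hrho : 0 < rho)
  (P1 P2 P3 : pt) (h3 : three_periodic a b P1 P2 P3) :
  let c := sqrt (a ^ 2 - b ^ 2) in
  let d := delta a b in
  let f1 := focus1 a b in
  let X1 := incenter (invert f1 rho P1) (invert f1 rho P2) (invert f1 rho P3) in
  let C1 := (c * (-1 + rho ^ 2 * (-2 * a ^ 2 + b ^ 2 + 2 * d) / (2 * b ^ 4)), 0) in
  let R1 := rho ^ 2 * (-2 * d ^ 2 + b ^ 4 + (2 * a ^ 2 - b ^ 2) * d) / (2 * a * b ^ 4) in
  pdist X1 C1 = R1.
Proof.
  intros c d f1 X1 C1 R1.
  assert (hc2 : c ^ 2 = a ^ 2 - b ^ 2) by (apply pow2_sqrt; nra).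
  assert (hc : 0 < c) by (apply sqrt_lt_R0; nra).
  assert (hca : c < a) by nra.
  pose proof h3 as (e1 & e2 & e3 & hnc & _).
  destruct (ellipse_point_surj a b c hb hc hca hc2 P1 e1) as (u1 & hu1 & ->).
  destruct (ellipse_point_surj a b c hb hc hca hc2 P2 e2) as (u2 & hu2 & ->).
  destruct (ellipse_point_surj a b c hb hc hca hc2 P3 e3) as (u3 & hu3 & ->).
  destruct (noncollinear_distinct _ _ _ hnc) as (n12 & n13 & n23).
  assert (m12 : u1 <> u2) by (intros ->; contradiction).
  assert (m13 : u1 <> u3) by (intros ->; contradiction).
  assert (m23 : u2 <> u3) by (intros ->; contradiction).
  destruct (three_periodic_common_caustic a b c _ _ _ ltac:(lra) ltac:(lra) hc2 h3)
    as (lam & t12 & t13 & t23).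
  unfold X1, C1, R1, f1, focus1, d. fold c.
  exact (focus_inversive_incircle a b c hb hc hca hc2 u1 u2 u3 lam hu1 hu2 hu3 m12 m13 m23
    t12 t13 t23 rho hrho).
Qed.
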